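(* Let $G$ be a discrete group, $X$ a finite proper $G$-CW-complex, $f\colon X\to X$ a $G$-map, $\Gamma=\Pi(G,X)$, $\phi=\Pi(G,f)$, $R$ a commutative ring, and $M=\bigoplus_{b\in B}R\Gamma(?,\beta(b))$ with $B$ finite and $\beta\colon B\to\mathrm{Ob}\,\Gamma$. For a conjugacy class $(H)$ of subgroups of $G$ let $M_H=\bigoplus_{b:\ \mathrm{tp}(\beta(b))=(H)}R\Gamma(?,\beta(b))$. Then every natural transformation $g\colon M\to M\circ\phi$ satisfies $g(M_H)\subseteq\bigoplus_{(K)\ge(H)}M_K\circ\phi$.
   Context: $\Pi(G,X)$: objects are $G$-maps $x\colon G/H\to X$, morphisms $x\to y$ ($y\colon G/K\to X$) are pairs $(\sigma,[w])$ with $\sigma\colon G/H\to G/K$ a $G$-map and $[w]$ the class rel $G/H\times\partial I$ of a $G$-map $w\colon G/H\times I\to X$ with $w_1=x$, $w_0=y\circ\sigma$; $\phi$ is composition with $f$. $R\Gamma$-modules are contravariant functors $\Gamma\to R$-modules; $R\Gamma(?,x)=R[\mathrm{Mor}_\Gamma(?,x)]$. The type of an object $x\colon G/H\to X$ is $\mathrm{tp}(x)=(H)$. On conjugacy classes of subgroups, $(H)\le(K)$ iff there exists a $G$-map $G/H\to G/K$. *)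

From HB Require Import structures.
From mathcomp Require Import all_boot all_order all_algebra.
From mathcomp Require Import all_classical all_reals all_analysis.
From mathcomp Require Import Rstruct Rstruct_topology.
Import Order.TTheory GRing.Theory Num.Theory.

Set Implicit Arguments.
Unset Strict Implicit.
Unset Printing Implicit Defensive.

Local Open Scope classical_set_scope.
Local Open Scope ring_scope.

Definition Real : realType := Rdefinitions.R.

Definition unitI : set Real := `[0, 1].

Definition sqnorm n (e : 'rV[Real]_n) : Real := \sum_(i < n) e ord0 i ^+ 2.
Definition disk n : set 'rV[Real]_n := [set e | sqnorm e <= 1].
Definition odisk n : set 'rV[Real]_n := [set e | sqnorm e < 1].
Definition sphere n : set 'rV[Real]_n := [set e | sqnorm e = 1].
Arguments disk n _ : clear implicits.
Arguments odisk n _ : clear implicits.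
Arguments sphere n _ : clear implicits.

Section Groups.
Context {G : groupType}.
Local Open Scope group_scope.

Definition is_subgroup (H : set G) : Prop :=
  [/\ H 1, (forall a b, H a -> H b -> H (a * b)) & (forall a, H a -> H a^-1)].

Definition lcoset (H : set G) (g : G) : set G := [set g * h | h in H].

Definition coset_space (H : set G) := {A : set G | exists g, A = lcoset H g}.

HB.instance Definition _ (H : set G) := gen_eqMixin (coset_space H).
HB.instance Definition _ (H : set G) := gen_choiceMixin (coset_space H).

Definition dcoset (H : set G) := discrete_topology (coset_space H).

Lemma lcoset_act (H : set G) (g g' : G) :
  [set g * a | a in lcoset H g'] = lcoset H (g * g').
Proof.
rewrite /lcoset; apply/seteqP; split => x /=.
- by case=> a [h Hh <-] <-; exists h => //; rewrite mulgA.
- case=> h Hh <-; exists (g' * h); first by exists h.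
  by rewrite mulgA.
Qed.

Definition cact (H : set G) (g : G) (A : dcoset H) : dcoset H.
Proof.
exists [set g * a | a in sval A].
case: A => A [g' eA] /=; exists (g * g'); rewrite eA; exact: lcoset_act.
Defined.

Definition Gmapc (H K : set G) (s : dcoset H -> dcoset K) : Prop :=
  forall g a, s (cact g a) = cact g (s a).

Definition conj_subgroup (H : set G) (c : G) : set G := [set c * h * c^-1 | h in H].

(* (H) = (K): H and K are conjugate, i.e. define the same conjugacy class *)
Definition same_class (H K : set G) : Prop := exists c, K = conj_subgroup H c.

(* (H) <= (K) iff there exists a G-map G/H -> G/K *)
Definition class_le (H K : set G) : Prop := exists s : dcoset H -> dcoset K, Gmapc s.

End Groups.

Section GSpaces.
Context {G : groupType} {X : topologicalType} (act : G -> X -> X).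
Local Open Scope group_scope.

Definition is_Gspace : Prop :=
  [/\ (forall x, act 1 x = x),
      (forall g h x, act (g * h) x = act g (act h x)) &
      (forall g, continuous (act g))].

(* X is a finite proper G-CW-complex: X is Hausdorff and has finitely many
   equivariant cells G/H_i x D^(n_i) with finite isotropy H_i, with
   characteristic G-maps Phi_i such that
   - the open cells Phi_i(G/H_i x int D^(n_i)) partition X (injectively),
   - the boundary of each cell lies in the union of cells of lower dimension,
   - X carries the weak (quotient) topology w.r.t. the Phi_i. *)
Definition finite_proper_GCW : Prop :=
  hausdorff_space X /\
  exists (I : finType) (H : I -> set G) (n : I -> nat)
         (Phi : forall i, (dcoset (H i) * 'rV[Real]_(n i))%type -> X),
  [/\ (forall i, is_subgroup (H i) /\ finite_set (H i)),
      (forall i, {within [set: dcoset (H i)] `*` disk (n i), continuous (Phi i)}),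
      (forall i g a e, disk (n i) e -> Phi i (cact g a, e) = act g (Phi i (a, e))),
      (forall x, exists i a e, odisk (n i) e /\ Phi i (a, e) = x) &
    [/\
      (forall i j a b e e', odisk (n i) e -> odisk (n j) e' ->
         Phi i (a, e) = Phi j (b, e') ->
         existT (fun k => (dcoset (H k) * 'rV[Real]_(n k))%type) i (a, e) =
         existT (fun k => (dcoset (H k) * 'rV[Real]_(n k))%type) j (b, e')),
      (forall i a e, sphere (n i) e ->
         exists j b e', [/\ (n j < n i)%N, disk (n j) e' & Phi j (b, e') = Phi i (a, e)]) &
      (forall U : set X, open U <->
         forall i, exists V : set (dcoset (H i) * 'rV[Real]_(n i))%type,
           open V /\
           ([set: dcoset (H i)] `*` disk (n i)) `&` (Phi i @^-1` U) =
           ([set: dcoset (H i)] `*` disk (n i)) `&` V)]].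

(* objects: G-maps x : G/H -> X (G/H discrete, so continuity is automatic) *)
Record obj := Obj {
  oH : set G;
  oH_sub : is_subgroup oH;
  omap : dcoset oH -> X;
  omap_equi : forall g a, omap (cact g a) = act g (omap a) }.

(* raw data (sigma, w) of a morphism x -> y *)
Definition premor (x y : obj) :=
  ((dcoset (oH x) -> dcoset (oH y)) * ((dcoset (oH x) * Real)%type -> X))%type.

Definition Gpath (H : set G) (w : (dcoset H * Real)%type -> X) : Prop :=
  {within [set: dcoset H] `*` unitI, continuous w} /\
  (forall g a t, unitI t -> w (cact g a, t) = act g (w (a, t))).

Definition valid_premor (x y : obj) (p : premor x y) : Prop :=
  [/\ Gmapc p.1, Gpath p.2,
      (forall a, p.2 (a, 1%R) = @omap x a) &
      (forall a, p.2 (a, 0%R) = @omap y (p.1 a))].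

Definition htpy_rel (H : set G) (w w' : (dcoset H * Real)%type -> X) : Prop :=
  exists F : ((dcoset H * Real) * Real)%type -> X,
  [/\ {within ([set: dcoset H] `*` unitI) `*` unitI, continuous F},
      (forall g a t s, unitI t -> unitI s -> F ((cact g a, t), s) = act g (F ((a, t), s))),
      (forall q, unitI q.2 -> F (q, 0%R) = w q /\ F (q, 1%R) = w' q) &
      (forall a s, unitI s -> F ((a, 0%R), s) = w (a, 0%R) /\ F ((a, 1%R), s) = w (a, 1%R))].

Definition premor_rel (x y : obj) (p q : premor x y) : Prop :=
  p.1 = q.1 /\ htpy_rel p.2 q.2.

(* morphisms x -> y: classes (sigma, [w]), represented as the set of
   valid representatives *)
Definition mor_class (x y : obj) (p : premor x y) : set (premor x y) :=
  [set q | valid_premor q /\ premor_rel p q].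

Definition is_mor (x y : obj) (C : set (premor x y)) : Prop :=
  exists p, valid_premor p /\ C = mor_class p.

Definition mor (x y : obj) := {C : set (premor x y) | is_mor C}.

HB.instance Definition _ (x y : obj) := gen_eqMixin (mor x y).
HB.instance Definition _ (x y : obj) := gen_choiceMixin (mor x y).

(* composition of representatives: (tau,[v]) o (sigma,[w]) = (tau sigma, [w * v sigma])
   where the composite path runs through w on [1/2,1] and v o sigma on [0,1/2] *)
Definition pcomp (x y z : obj) (q : premor y z) (p : premor x y) : premor x z :=
  (q.1 \o p.1,
   fun r => if (2^-1 <= r.2)%R then p.2 (r.1, 2 * r.2 - 1)%R
            else q.2 (p.1 r.1, 2 * r.2)%R).

Definition comp_set (x y z : obj) (D : set (premor y z)) (C : set (premor x y)) :
    set (premor x z) :=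
  [set r | valid_premor r /\ exists p q, [/\ C p, D q & premor_rel (pcomp q p) r]].

End GSpaces.

Section Phi.
Context {G : groupType} {X : topologicalType} (act : G -> X -> X) (f : X -> X)
        (hf : forall g x, f (act g x) = act g (f x)).

Definition phi_obj (x : obj act) : obj act.
Proof.
refine (@Obj _ _ act (oH x) (oH_sub x) (f \o @omap _ _ act x) _).
by move=> g a /=; rewrite omap_equi hf.
Defined.

Definition phi_premor (x y : obj act) (p : premor x y) : premor (phi_obj x) (phi_obj y) :=
  (p.1, f \o p.2).

Definition phi_set (x y : obj act) (C : set (premor x y)) :
    set (premor (phi_obj x) (phi_obj y)) :=
  [set r | valid_premor r /\ exists p, C p /\ premor_rel (phi_premor p) r].

End Phi.

Section Module.
Context {G : groupType} {X : topologicalType} (act : G -> X -> X)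
        {Rg : comPzRingType} {B : finType} (beta : B -> obj act).

(* basis of M(y): pairs (b, u) with u in Mor(y, beta b) *)
Definition key (y : obj act) := {b : B & mor y (beta b)}.

HB.instance Definition _ (y : obj act) := gen_eqMixin (key y).
HB.instance Definition _ (y : obj act) := gen_choiceMixin (key y).

(* elements of M(y) = finitely supported functions key y -> R *)
Definition finsupp (y : obj act) (m : key y -> Rg) : Prop :=
  finite_set [set k | m k != 0].

(* M(u) : M(z) -> M(y) for a morphism u : y -> z (given by its class U):
   the R-linear extension of (b, v) |-> (b, v o u) *)
Definition Mact (y z : obj act) (U : set (premor y z)) (m : key z -> Rg) : key y -> Rg :=
  fun k => \sum_(k' \in [set k' : key z |
       existT (fun b => set (premor y (beta b))) (projT1 k') (comp_set (sval (projT2 k')) U)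
     = existT (fun b => set (premor y (beta b))) (projT1 k) (sval (projT2 k))]) m k'.

End Module.

Definition is_nat_trans {G : groupType} {X : topologicalType} (act : G -> X -> X)
    (f : X -> X) (hf : forall g x, f (act g x) = act g (f x))
    {Rg : comPzRingType} {B : finType} (beta : B -> obj act)
    (g : forall y : obj act, (key beta y -> Rg) -> (key beta (phi_obj hf y) -> Rg)) : Prop :=
  [/\ (forall y m, finsupp m -> finsupp (g y m)),
      (forall y m1 m2, finsupp m1 -> finsupp m2 ->
         g y (fun k => m1 k + m2 k) = (fun k => g y m1 k + g y m2 k)),
      (forall y (r : Rg) m, finsupp m ->
         g y (fun k => r * m k) = (fun k => r * g y m k)) &
      (forall y z (u : mor y z) m, finsupp m ->
         g y (Mact (sval u) m) = Mact (@phi_set _ _ act f hf _ _ (sval u)) (g z m))].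

(* Additivity reduces the claim to basis vectors: every basis vector e_(b',v) of
   (M o phi)(y) occurring in g_y(m) occurs in g_y(e_(b,u)) for some e_(b,u),
   u : y -> beta b, in the support of m.  The identity of beta b is a left unit
   for composition in Pi(G,X) (up to a reparametrisation homotopy), so
   e_(b,u) = M(u) e_(b,id) and naturality gives
   g_y(e_(b,u)) = (M o phi)(u) (g_(beta b) e_(b,id)).  Hence e_(b',v) is the image
   of a basis vector e_(b',w) of (M o phi)(beta b), i.e. of a morphism
   w : phi(beta b) -> beta b', and the G-map G/H_b -> G/H_b' underlying w gives
   tp(beta b) <= tp(beta b'). *)

From Pilot Require Import Defs.
From mathcomp Require Import all_boot all_order all_algebra.
From mathcomp Require Import all_classical all_reals all_analysis.
From mathcomp Require Import Rstruct Rstruct_topology lra.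
From Stdlib Require Import Eqdep_dec.
Import Order.TTheory GRing.Theory Num.Theory.

Local Open Scope classical_set_scope.
Local Open Scope ring_scope.

(* Otherwise [Real] would denote the structure [reals.Real]. *)
Local Notation Real := Defs.Real.

Lemma within_comp_continuous {T U V : topologicalType} {A : set T} {B : set U}
    {f : U -> V} (h : T -> U) :
  {within B, continuous f} -> continuous h -> {homo h : x / A x >-> B x} ->
  {within A, continuous (f \o h)}.
Proof.
move=> /subspace_continuousP cf ch hAB; apply/subspace_continuousP => x Ax.
apply: (cvg_comp h f _ (cf _ (hAB _ Ax))) => P /=; rewrite !nbhs_simpl /within /=.
by move=> /(ch x); rewrite nbhs_simpl /=; apply: filterS => z Pz /hAB /Pz.
Qed.

Lemma discrete_continuous {T : discreteTopologicalType} {Y : topologicalType}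
    (f : T -> Y) : continuous f.
Proof.
by move=> x P /nbhs_singleton Pfx; rewrite /= nbhs_principalE; apply/principal_filterP.
Qed.

Lemma fst_continuous {T U : topologicalType} : continuous (@fst T U).
Proof. by move=> z; exact: cvg_fst. Qed.

Lemma snd_continuous {T U : topologicalType} : continuous (@snd T U).
Proof. by move=> z; exact: cvg_snd. Qed.

Lemma continuous_prod_map {T1 T2 U1 U2 : topologicalType} (f : T1 -> U1) (g : T2 -> U2) :
  continuous f -> continuous g -> continuous (fun z : T1 * T2 => (f z.1, g z.2)).
Proof.
move=> cf cg z; apply: cvg_pair.
- exact: continuous_comp (fst_continuous z) (cf _).
- exact: continuous_comp (snd_continuous z) (cg _).
Qed.

Lemma closed_setX (T U : topologicalType) (P : set T) (Q : set U) :
  closed P -> closed Q -> closed (P `*` Q).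
Proof.
move=> cP cQ; have -> : P `*` Q = (fst @^-1` P) `&` (snd @^-1` Q) by [].
by apply: closedI; apply: preimage_closed => // z _;
  [exact: fst_continuous | exact: snd_continuous].
Qed.

Lemma within_continuous_ifle (T U : topologicalType) (A : set T) (h : T -> Real)
    (c : Real) (f g : T -> U) :
  closed A -> continuous h ->
  {within A `&` [set x | c <= h x], continuous f} ->
  {within A `&` [set x | h x <= c], continuous g} ->
  (forall x, A x -> h x = c -> f x = g x) ->
  {within A, continuous (fun x => if c <= h x then f x else g x)}.
Proof.
move=> cA ch cf cg efg.
have closedAh (P : set Real) : closed P -> closed (A `&` (h @^-1` P)).
  by move=> cP; apply: closedI => //; apply: preimage_closed => // x _; exact: ch.
have -> : A = (A `&` [set x | c <= h x]) `|` (A `&` [set x | h x <= c]).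
  rewrite -setIUr; apply/esym/setIidl => x _ /=.
  by case: (lerP c (h x)) => [|/ltW]; [left | right].
apply: withinU_continuous.
- exact: (closedAh _ (@closed_ge Real c)).
- exact: (closedAh _ (@closed_le Real c)).
- by apply: subspace_eq_continuous cf => x /set_mem [_ /= hx]; rewrite /from_subspace hx.
- apply: subspace_eq_continuous cg => x /set_mem [Ax /= hxc].
  rewrite /from_subspace; case: ifPn => // cx; apply/esym/efg => //.
  by apply/eqP; rewrite eq_le hxc.
Qed.

Lemma unitIP (t : Real) : unitI t <-> 0 <= t <= 1.
Proof. by rewrite /unitI /= in_itv. Qed.

Lemma unitI0 : unitI (0 : Real). Proof. by apply/unitIP; rewrite lexx ler01. Qed.
Lemma unitI1 : unitI (1 : Real). Proof. by apply/unitIP; rewrite lexx ler01. Qed.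

Lemma unitI_double (t : Real) : unitI t -> t <= 2^-1 -> unitI (2 * t).
Proof. by move=> /unitIP /andP[? ?] ?; apply/unitIP/andP; split; lra. Qed.

Lemma unitI_double_sub1 (t : Real) : unitI t -> 2^-1 <= t -> unitI (2 * t - 1).
Proof. by move=> /unitIP /andP[? ?] ?; apply/unitIP/andP; split; lra. Qed.

Lemma continuous_affine (a b : Real) : continuous (fun t : Real => a * t + b).
Proof.
by move=> t; apply: cvgD; [apply: cvgM; [exact: cvg_cst | exact: cvg_id] | exact: cvg_cst].
Qed.

Lemma continuous_subl (a : Real) : continuous (fun t : Real => a - t).
Proof. by move=> t; apply: cvgB; [exact: cvg_cst | exact: cvg_id]. Qed.

Lemma continuous_map_snd {T : topologicalType} (r : Real -> Real) :
  continuous r -> continuous (fun z : T * Real => (z.1, r z.2)).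
Proof. by move=> cr; apply: (continuous_prod_map id r) => // x; exact: cvg_id. Qed.

Lemma continuous_linear_htpy {T : topologicalType} (rho : Real -> Real) :
  continuous rho ->
  continuous (fun z : (T * Real) * Real =>
    ((z.1.1, (1 - z.2) * rho z.1.2 + z.2 * z.1.2) : T * Real)).
Proof.
move=> crho z.
have c2 := @snd_continuous (T * Real)%type Real z.
have c12 : {for z, continuous (fun z : (T * Real) * Real => z.1.2)}.
  exact: continuous_comp (fst_continuous z) (snd_continuous _).
have c11 : {for z, continuous (fun z : (T * Real) * Real => z.1.1)}.
  exact: continuous_comp (fst_continuous z) (fst_continuous _).
have cE : {for z, continuous (fun z : (T * Real) * Real =>
                              (1 - z.2) * rho z.1.2 + z.2 * z.1.2)}.
  apply: cvgD; apply: cvgM => //; first by apply: cvgB; [exact: cvg_cst | exact: c2].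
  exact: continuous_comp c12 (crho _).
exact: cvg_pair c11 cE.
Qed.

Section Homotopy.
Context {G : groupType} {X : topologicalType} {act : G -> X -> X}.

Local Notation cyl_type H := (dcoset H * Real)%type.
Local Notation cyl H := ([set: dcoset H] `*` unitI).

Lemma closed_cyl (H : set G) : closed (cyl H).
Proof. exact: closed_setX closedT (interval_closed _ _). Qed.

Lemma htpy_rel_refl {H : set G} {w : cyl_type H -> X} :
  Gpath act w -> htpy_rel act w w.
Proof.
move=> [cw ew]; exists (w \o fst); split => //.
- by apply: (within_comp_continuous fst cw) => [|z []]; first exact: fst_continuous.
- by move=> g a t s ut _ /=; exact: ew.
Qed.

Lemma htpy_rel_sym {H : set G} {w w' : cyl_type H -> X} :
  htpy_rel act w w' -> htpy_rel act w' w.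
Proof.
move=> [F [cF eF eF01 eFend]].
have unitI1B s : unitI s -> unitI (1 - s).
  by move=> /unitIP /andP[? ?]; apply/unitIP/andP; split; lra.
exists (F \o fun z => (z.1, 1 - z.2)); split.
- apply: (within_comp_continuous (fun z : cyl_type H * Real => (z.1, 1 - z.2)) cF).
    exact: (continuous_map_snd _ (continuous_subl 1)).
  by move=> z [cz /unitI1B].
- by move=> g a t s ut us /=; apply: eF => //; exact: unitI1B.
- by move=> q uq /=; rewrite subr0 subrr; have [-> ->] := eF01 q uq.
- move=> a s us /=; have [-> ->] := eFend a _ (unitI1B _ us).
  have [<- <-] := eFend a _ unitI1.
  by rewrite (eF01 (a, 0) unitI0).2 (eF01 (a, 1) unitI1).2.
Qed.

Lemma htpy_rel_trans {H : set G} {w w' w'' : cyl_type H -> X} :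
  htpy_rel act w w' -> htpy_rel act w' w'' -> htpy_rel act w w''.
Proof.
move=> [F1 [cF1 eF1 eF1ends eF1rel]] [F2 [cF2 eF2 eF2ends eF2rel]].
exists (fun z => if 2^-1 <= z.2 then F2 (z.1, 2 * z.2 - 1) else F1 (z.1, 2 * z.2)).
split.
- apply: within_continuous_ifle.
  + exact: closed_setX (closed_cyl H) (interval_closed _ _).
  + exact: snd_continuous.
  + apply: (within_comp_continuous (fun z : cyl_type H * Real => (z.1, 2 * z.2 - 1)) cF2).
      exact: (continuous_map_snd _ (continuous_affine 2 (-1))).
    by move=> z [[cz us] hs]; split => //; exact: unitI_double_sub1.
  + apply: (within_comp_continuous (fun z : cyl_type H * Real => (z.1, 2 * z.2)) cF1).
      exact: (continuous_map_snd _ (@mulrl_continuous _ 2)).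
    by move=> z [[cz us] hs]; split => //; exact: unitI_double.
  + move=> [q s] [[_ uq] _] /= ->; rewrite mulfV ?pnatr_eq0 // subrr.
    by rewrite (eF2ends q uq).1 (eF1ends q uq).2.
- move=> g a t s ut us /=; case: lerP => hs.
    by apply: eF2 => //; exact: unitI_double_sub1.
  by apply: eF1 => //; apply: unitI_double => //; exact: ltW.
- move=> q uq /=; rewrite mulr0 mulr1.
  have -> : (2^-1 <= 0 :> Real) = false by apply/negbTE; rewrite -ltNge; lra.
  have -> : (2^-1 <= 1 :> Real) = true by apply/idP; lra.
  have -> : (2 - 1 : Real) = 1 by lra.
  by rewrite (eF1ends q uq).1 (eF2ends q uq).2.
- move=> a s us /=; case: lerP => hs.
    have [-> ->] := eF2rel a _ (unitI_double_sub1 _ us hs).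
    have [<- <-] := eF1rel a _ unitI1.
    by rewrite (eF1ends (a, 0) unitI0).2 (eF1ends (a, 1) unitI1).2.
  by apply: eF1rel; apply: unitI_double => //; exact: ltW.
Qed.

Lemma htpy_rel_reparam {H : set G} {w : cyl_type H -> X} (rho : Real -> Real) :
  Gpath act w -> continuous rho -> {homo rho : t / unitI t} -> rho 0 = 0 -> rho 1 = 1 ->
  htpy_rel act (fun r => w (r.1, rho r.2)) w.
Proof.
move=> [cw ew] crho rhoI rho0 rho1.
have unitI_lerp t s : unitI t -> unitI s -> unitI ((1 - s) * rho t + s * t).
  move=> ut us; have /unitIP /andP[? ?] := rhoI t ut.
  by move: ut us => /unitIP /andP[? ?] /unitIP /andP[? ?]; apply/unitIP/andP; split; nra.
exists (w \o fun z : cyl_type H * Real => (z.1.1, (1 - z.2) * rho z.1.2 + z.2 * z.1.2)).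
split.
- apply: (within_comp_continuous _ cw); first exact: continuous_linear_htpy.
  by move=> [[a t] s] [[_ ut] us]; split => //; exact: unitI_lerp.
- by move=> g a t s ut us /=; apply: ew; exact: unitI_lerp.
- by move=> [a t] ut /=; rewrite subr0 mul1r !mul0r addr0 subrr mul0r add0r mul1r.
- by move=> a s us /=; rewrite rho0 rho1 !mulr0 !mulr1 addr0 subrK.
Qed.

(* The path component of [pcomp q p] is convertible to
   [path_concat p.2 (fun r => q.2 (p.1 r.1, r.2))]. *)
Definition path_concat {H : set G} (w v : cyl_type H -> X) : cyl_type H -> X :=
  fun r => if 2^-1 <= r.2 then w (r.1, 2 * r.2 - 1) else v (r.1, 2 * r.2).

Lemma htpy_rel_concat_const {H : set G} {w : cyl_type H -> X} :
  Gpath act w -> htpy_rel act (path_concat w (fun r => w (r.1, 0))) w.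
Proof.
move=> pw; set rho := fun t : Real => Num.max 0 (2 * t - 1).
have -> : path_concat w (fun r => w (r.1, 0)) = (fun r => w (r.1, rho r.2)).
  apply: funext => -[a t]; rewrite /path_concat /rho /=.
  by case: lerP => ht; congr (w (a, _)); [rewrite max_r | rewrite max_l]; lra.
apply: htpy_rel_reparam => //.
- by move=> t; exact: (continuous_max (cvg_cst _) (continuous_affine 2 (-1) t)).
- move=> t /unitIP /andP[? ?]; apply/unitIP; rewrite /rho.
  by rewrite maxEle; case: (lerP 0 (2 * t - 1)) => ?; apply/andP; split; lra.
- by rewrite /rho maxEle; case: lerP; lra.
- by rewrite /rho maxEle; case: lerP; lra.
Qed.

Lemma htpy_rel_precomp {H K : set G} {sigma : dcoset H -> dcoset K}
    {v v' : cyl_type K -> X} :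
  Gmapc sigma -> htpy_rel act v v' ->
  htpy_rel act (fun r => v (sigma r.1, r.2)) (fun r => v' (sigma r.1, r.2)).
Proof.
move=> hsigma [F [cF eF eFends eFrel]].
exists (F \o fun z : cyl_type H * Real => ((sigma z.1.1, z.1.2), z.2)); split.
- apply: (within_comp_continuous _ cF); last by move=> [[a t] s] [[_ ut] us].
  apply: (continuous_prod_map (fun q : cyl_type H => (sigma q.1, q.2)) id) => [|s].
    apply: (continuous_prod_map sigma id) => [|t]; first exact: discrete_continuous.
    exact: cvg_id.
  exact: cvg_id.
- by move=> g a t s ut us /=; rewrite hsigma; exact: eF.
- by move=> [a t] ut; exact: (eFends (sigma a, t)).
- by move=> a s us; exact: eFrel.
Qed.

Lemma htpy_rel_concatr {H : set G} {w v v' : cyl_type H -> X} :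
  Gpath act w -> htpy_rel act v v' -> (forall a, v (a, 1) = w (a, 0)) ->
  htpy_rel act (path_concat w v) (path_concat w v').
Proof.
move=> [cw ew] [F [cF eF eFends eFrel]] vw.
exists (fun z => if 2^-1 <= z.1.2 then w (z.1.1, 2 * z.1.2 - 1)
                 else F ((z.1.1, 2 * z.1.2), z.2)).
split.
- apply: within_continuous_ifle.
  + exact: closed_setX (closed_cyl H) (interval_closed _ _).
  + by move=> z; apply: continuous_comp (fst_continuous z) (snd_continuous _).
  + apply: (within_comp_continuous (fun z : cyl_type H * Real => (z.1.1, 2 * z.1.2 - 1)) cw).
      move=> z; exact: continuous_comp (fst_continuous z)
        (continuous_map_snd _ (continuous_affine 2 (-1)) _).
    by move=> z [[[_ ut] _] ht]; split => //; exact: unitI_double_sub1.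
  + apply: (within_comp_continuous
             (fun z : cyl_type H * Real => ((z.1.1, 2 * z.1.2), z.2)) cF).
      apply: (continuous_prod_map (fun q : cyl_type H => (q.1, 2 * q.2)) id) => [|s].
        exact: (continuous_map_snd _ (@mulrl_continuous _ 2)).
      exact: cvg_id.
    by move=> z [[[_ ut] us] ht]; do !split => //; exact: unitI_double.
  + move=> [[a t] s] [_ us] /= ->; rewrite mulfV ?pnatr_eq0 // subrr.
    by rewrite (eFrel a s us).2 vw.
- move=> g a t s ut us /=; case: lerP => ht.
    by apply: ew; exact: unitI_double_sub1.
  by apply: eF => //; apply: unitI_double => //; exact: ltW.
- move=> [a t] ut; rewrite /path_concat /=; case: lerP => ht //.
  exact: (eFends (a, 2 * t) (unitI_double _ ut (ltW ht))).
- move=> a s us; rewrite /path_concat /= mulr0.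
  have -> : (2^-1 <= 0 :> Real) = false by apply/negbTE; rewrite -ltNge; lra.
  have -> : (2^-1 <= 1 :> Real) = true by apply/idP; lra.
  by split => //; exact: (eFrel a s us).1.
Qed.

End Homotopy.

Section FundamentalCategory.
Context {G : groupType} {X : topologicalType} {act : G -> X -> X}.

Definition id_premor (x : obj act) : premor x x := (id, fun r => Defs.omap (o := x) r.1).

Lemma valid_id_premor (x : obj act) : valid_premor (id_premor x).
Proof.
split => //; split.
- apply: continuous_subspaceT => r.
  exact: continuous_comp (fst_continuous r) (discrete_continuous _ _).
- by move=> g a t _ /=; rewrite omap_equi.
Qed.

Definition id_mor (x : obj act) : mor x x :=
  exist _ (mor_class (id_premor x))
    (ex_intro _ (id_premor x) (conj (valid_id_premor x) erefl)).

Lemma premor_rel_refl {x y : obj act} {p : premor x y} : valid_premor p -> premor_rel p p.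
Proof. by case=> _ pp _ _; split => //; exact: htpy_rel_refl. Qed.

Lemma premor_rel_sym {x y : obj act} {p q : premor x y} : premor_rel p q -> premor_rel q p.
Proof. by case=> e h; split; [rewrite e | exact: htpy_rel_sym]. Qed.

Lemma premor_rel_trans {x y : obj act} {p q r : premor x y} :
  premor_rel p q -> premor_rel q r -> premor_rel p r.
Proof. by case=> e h [e' h']; split; [rewrite e | exact: htpy_rel_trans h h']. Qed.

Lemma premor_rel_pcomp_idl {x z : obj act} {p : premor x z} :
  valid_premor p -> premor_rel (Defs.pcomp (id_premor z) p) p.
Proof.
case=> _ pp _ p0; split => //.
have -> : (Defs.pcomp (id_premor z) p).2 = path_concat p.2 (fun r => p.2 (r.1, 0)).
  by apply: funext => r; rewrite /= /path_concat p0.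
exact: htpy_rel_concat_const.
Qed.

Lemma premor_rel_pcompl {x y z : obj act} {p : premor x y} {q q' : premor y z} :
  valid_premor p -> valid_premor q -> premor_rel q q' ->
  premor_rel (Defs.pcomp q p) (Defs.pcomp q' p).
Proof.
move=> [sp pp _ p0] [_ _ q1 _] [e hq]; split; first by rewrite /= e.
apply: (htpy_rel_concatr pp (htpy_rel_precomp sp hq)) => a /=.
by rewrite q1 p0.
Qed.

Lemma comp_set_idl (x z : obj act) (p : premor x z) :
  valid_premor p -> comp_set (mor_class (id_premor z)) (mor_class p) = mor_class p.
Proof.
move=> vp; apply/seteqP; split => r.
- move=> [vr [p' [q [[vp' pp'] [_ iq] q'r]]]]; split => //.
  apply: (premor_rel_trans pp'); apply: premor_rel_trans q'r.
  apply: (premor_rel_trans (premor_rel_sym (premor_rel_pcomp_idl vp'))).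
  exact: premor_rel_pcompl vp' (valid_id_premor z) iq.
- move=> [vr pr]; split => //; exists r, (id_premor z); split => //.
  + by split; [exact: valid_id_premor | exact: premor_rel_refl (valid_id_premor z)].
  + exact: premor_rel_pcomp_idl.
Qed.

End FundamentalCategory.

Section ConjugacyClasses.
Context {G : groupType}.
Local Open Scope group_scope.

Lemma same_class_refl (H : set G) : same_class H H.
Proof.
exists 1; apply/seteqP; split => [x Hx|_ [x Hx <-]]; last by rewrite mul1g invg1 mulg1.
by exists x => //; rewrite mul1g invg1 mulg1.
Qed.

Lemma class_le_trans {H K L : set G} : class_le H K -> class_le K L -> class_le H L.
Proof. by move=> [s sG] [s' s'G]; exists (s' \o s) => g a /=; rewrite sG s'G. Qed.

Definition conj_coset {H : set G} (c : G) (A : dcoset H) : dcoset (conj_subgroup H c).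
Proof.
exists [set a * c^-1 | a in sval A].
case: A => A [g eA] /=; exists (g * c^-1); rewrite eA; apply/seteqP; split.
- by move=> _ [_ [h Hh <-] <-]; exists (c * h * c^-1); [exists h | rewrite !mulgA mulgVK].
- by move=> _ [_ [h Hh <-] <-]; exists (g * h); [exists h | rewrite !mulgA mulgVK].
Defined.

Lemma same_class_le {H K : set G} : same_class H K -> class_le H K.
Proof.
move=> [c ->]; exists (conj_coset c) => g a; apply: eq_exist => /=.
apply/seteqP; split.
- by move=> _ [_ [y Ay <-] <-]; exists (y * c^-1); [exists y | rewrite mulgA].
- by move=> _ [_ [y Ay <-] <-]; exists (g * y); [exists y | rewrite mulgA].
Qed.

End ConjugacyClasses.

Definition delta {K : eqType} {R : pzSemiRingType} (k0 : K) : K -> R :=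
  fun k => if k == k0 then 1 else 0.

Lemma finite_support_delta {K : eqType} {R : pzSemiRingType} (k0 : K) :
  finite_set [set k | delta k0 k != 0 :> R].
Proof.
apply: sub_finite_set (finite_set1 k0) => k /=.
by rewrite /delta; case: (eqVneq k k0) => // _; rewrite eqxx.
Qed.

Lemma fsbig_delta {K : choiceType} {R : pzSemiRingType} (S : set K) (k0 : K) :
  \sum_(k \in S) (delta k0 k : R) = if k0 \in S then 1 else 0.
Proof.
case: ifPn => [/set_mem Sk0 | /negP nSk0].
  rewrite -(fsbig_widen [set k0]) ?fsbig_set1 /delta ?eqxx // => [k -> //|k [_ /= nk]].
  by rewrite ifN //; apply/eqP.
rewrite fsbig1 // => k Sk; rewrite /delta; case: (eqVneq k k0) => // ek.
by move: Sk; rewrite ek => /mem_set.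
Qed.

Section FreeModule.
Context {G : groupType} {X : topologicalType} {act : G -> X -> X}
  {Rg : comPzRingType} {B : finType} (beta : B -> obj act).

Lemma key_sval_inj (y : obj act) (k k' : key beta y) :
  existT (fun b => set (premor y (beta b))) (projT1 k) (sval (projT2 k)) =
  existT _ (projT1 k') (sval (projT2 k')) -> k = k'.
Proof.
case: k k' => [b [U hU]] [b' [U' hU']] /= E.
have ebb' : b = b' := congr1 (@projT1 _ _) E; subst b'.
have eUU' := inj_pair2_eq_dec _ (@eq_comparable B) _ _ _ _ E; subst U'.
by congr existT; exact: eq_exist.
Qed.

Lemma Mact_delta (y : obj act) (b0 : B) (u0 : mor y (beta b0)) :
  Mact (sval u0) (delta (existT _ b0 (id_mor (beta b0)) : key beta (beta b0)) : _ -> Rg)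
  = delta (existT _ b0 u0 : key beta y).
Proof.
set k0 : key beta y := existT _ b0 u0.
have idl : comp_set (mor_class (id_premor (beta b0))) (sval u0) = sval u0.
  by case: (svalP u0) => p [vp ->]; exact: comp_set_idl.
apply: funext => k; rewrite /Mact fsbig_delta /delta; congr (if _ then _ else _).
apply/idP/eqP => [/set_mem /= | ->]; last by apply/mem_set; rewrite /= idl.
by rewrite idl => /(key_sval_inj y k0 k) ->.
Qed.

Lemma Mact_neq0 (y z : obj act) (U : set (premor y z)) (m : key beta z -> Rg)
    (k : key beta y) :
  Mact U m k != 0 -> exists k' : key beta z, projT1 k' = projT1 k.
Proof.
move=> nz; apply: contrapT => nok; move: nz; rewrite /Mact fsbig1 ?eqxx // => k' /= Sk'.
by exfalso; apply: nok; exists k'; move/(congr1 (@projT1 _ _)): Sk'.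
Qed.

End FreeModule.

Lemma mor_class_le {G : groupType} {X : topologicalType} {act : G -> X -> X}
    (x y : obj act) : mor x y -> class_le (oH x) (oH y).
Proof. by case=> _ [p [[sp _ _ _] _]]; exists p.1. Qed.

Section NaturalTransformations.
Context {G : groupType} {X : topologicalType} {act : G -> X -> X}
  {f : X -> X} {hf : forall g x, f (act g x) = act g (f x)}
  {Rg : comPzRingType} {B : finType} {beta : B -> obj act}
  {g : forall y : obj act, (key beta y -> Rg) -> (key beta (phi_obj hf y) -> Rg)}.
Hypothesis hg : is_nat_trans g.

Lemma nat_trans_delta_class_le {y : obj act} {k0 : key beta y}
    {k : key beta (phi_obj hf y)} :
  g y (delta k0) k != 0 -> class_le (oH (beta (projT1 k0))) (oH (beta (projT1 k))).
Proof.
case: hg => _ _ _ gnat; case: k0 => b0 u0 /=.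
rewrite -Mact_delta gnat; last exact: finite_support_delta.
by move=> /Mact_neq0 [[b u] /= <-]; exact: mor_class_le u.
Qed.

End NaturalTransformations.

Section AdditiveSupport.
Context {K1 : eqType} {K2 : Type} {R : pzRingType}.

Local Notation finsupp m := (finite_set [set k | m k != 0]).

Lemma finite_support_seq {m : K1 -> R} {s : seq K1} :
  (forall k, m k != 0 -> k \in s) -> finsupp m.
Proof. by move=> ms; apply: sub_finite_set (finite_seq s) => k /ms. Qed.

Lemma finite_support_scale (r : R) {m : K1 -> R} : finsupp m -> finsupp (fun k => r * m k).
Proof. by apply: sub_finite_set => k /=; apply: contraNneq => ->; rewrite mulr0. Qed.

Context {h : (K1 -> R) -> (K2 -> R)}.
Hypothesis hadd : forall m1 m2, finsupp m1 -> finsupp m2 ->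
  h (fun k => m1 k + m2 k) = (fun k => h m1 k + h m2 k).
Hypothesis hscale : forall r m, finsupp m -> h (fun k => r * m k) = (fun k => r * h m k).

Lemma additive_map0 : h (fun _ => 0) = (fun _ => 0).
Proof.
have fin0 : finsupp (fun _ : K1 => 0 : R).
  by apply: (finite_support_seq (s := [::])) => k; rewrite eqxx.
have e00 : (fun _ : K1 => 0 + 0 : R) = (fun _ => 0) by apply: funext => ?; rewrite addr0.
apply: funext => k; have := congr1 (fun m => m k) (hadd _ _ fin0 fin0).
by rewrite e00 => /esym/eqP; rewrite -subr_eq0 addrK => /eqP.
Qed.

Lemma additive_map_support {m : K1 -> R} : finsupp m ->
  forall k, h m k != 0 -> exists2 k0, m k0 != 0 & h (delta k0) k != 0.
Proof.
move=> /finite_seqP [s Es] k; have : forall k, m k != 0 -> k \in s.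
  by move=> k' mk'; have : [set k | m k != 0] k' by []; rewrite Es.
elim: s m {Es} => [|k0 s IH] m ms hmk.
  have m0 : m = (fun _ => 0) by apply: funext => k'; apply/eqP; apply: contraT => /ms.
  by move: hmk; rewrite m0 additive_map0 eqxx.
pose m' k' := if k' == k0 then 0 else m k'.
have m's k' : m' k' != 0 -> k' \in s.
  rewrite /m'; case: (eqVneq k' k0) => [_|nk /ms]; first by rewrite eqxx.
  by rewrite in_cons (negbTE nk).
have em : m = (fun k => m k0 * delta k0 k + m' k).
  apply: funext => k'; rewrite /m' /delta.
  by case: (eqVneq k' k0) => [->|_]; rewrite ?mulr1 ?addr0 ?mulr0 ?add0r.
have /= hadd_m := hadd _ _ (finite_support_scale (m k0) (finite_support_delta k0))
  (finite_support_seq m's).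
move: hmk; rewrite {1}em hadd_m.
have [m'k0 | /(IH m' m's) [k1 m'k1 hk1]] := eqVneq (h m' k) 0.
  rewrite m'k0 addr0 (hscale _ _ (finite_support_delta k0)) => nz.
  by exists k0; apply: contraNneq nz => ->; rewrite ?mul0r ?mulr0.
exists k1 => //; move: m'k1; rewrite /m'.
by case: (eqVneq k1 k0) => [_|//]; rewrite eqxx.
Qed.

End AdditiveSupport.

Theorem corollary4p2
  (G : groupType) (X : topologicalType) (act : G -> X -> X)
  (hact : is_Gspace act) (hX : finite_proper_GCW act)
  (f : X -> X) (hfc : continuous f) (hf : forall g x, f (act g x) = act g (f x))
  (Rg : comPzRingType) (B : finType) (beta : B -> obj act)
  (g : forall y : obj act, (key beta y -> Rg) -> (key beta (phi_obj hf y) -> Rg))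
  (hg : is_nat_trans g)
  (H : set G) (hH : is_subgroup H) :
  forall (y : obj act) (m : key beta y -> Rg),
    finsupp m ->
    (forall k, m k != 0 -> same_class H (oH (beta (projT1 k)))) ->
    forall k, g y m k != 0 ->
      exists K : set G,
        [/\ is_subgroup K, same_class K (oH (beta (projT1 k))) & class_le H K].
Proof.
move=> y m fm hm k gk.
exists (oH (beta (projT1 k))); split; [exact: oH_sub | exact: same_class_refl |].
have [_ hadd hscale _] := hg.
have [k0 mk0 gk0] := additive_map_support (hadd y) (hscale y) fm k gk.
apply: class_le_trans (same_class_le (hm k0 mk0)) _.
exact: (nat_trans_delta_class_le hg (k0 := k0) gk0).
Qed.
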